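(* Let $\mathbf A$ be a complete residuated lattice and $I$, $J$ arbitrary sets. (i) A mapping $\phi\colon A^I\to A^J$ is a $\phi$-type mapping if and only if there is a fuzzy relation $R\colon I\times J\to A$ with $\phi=\phi_R$; a mapping $\rho\colon A^J\to A^I$ is a $\rho$-type mapping if and only if there is a fuzzy relation $R\colon I\times J\to A$ with $\rho=\rho_R$. Moreover, a $\phi$-type mapping $\phi$ and a $\rho$-type mapping $\rho$ form a Galois connection between $A^I$ and $A^J$ if and only if there is a single fuzzy relation $R$ with $\phi=\phi_R$ and $\rho=\rho_R$. (ii) A mapping $\delta\colon A^I\to A^J$ is a $\delta$-type mapping if and only if $\delta=\delta_R$ for some fuzzy relation $R\colon I\times J\to A$; a mapping $\epsilon\colon A^J\to A^I$ is a $\delta$-type mapping if and only if $\epsilon=\epsilon_R$ for some fuzzy relation $R\colon I\times J\to A$. Moreover, $\delta$-type mappings $\delta\colon A^I\to A^J$ and $\epsilon\colon A^J\to A^I$ form a reversed Galois connection if and only if there is a single fuzzy relation $R$ with $\delta=\delta_R$ and $\epsilon=\epsilon_R$.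
   Context: A residuated lattice is an algebra $\mathbf A=(A;\vee,\wedge,\cdot,\rightarrow,0,1)$ such that $(A;\vee,\wedge,0,1)$ is a bounded lattice, $(A;\cdot,1)$ is a commutative monoid, and $x\cdot y\le z$ iff $x\le y\rightarrow z$; complete if the lattice reduct is complete. $A^K$ carries componentwise operations and order; $d^K$ is the constant element with value $d\in A$. A fuzzy relation is a map $R\colon I\times J\to A$. Operators: $\phi_R(x)(j)=\bigwedge_{i\in I}(R(i,j)\rightarrow x(i))$ ($A^I\to A^J$); $\rho_R(y)(i)=\bigvee_{j\in J}(R(i,j)\cdot y(j))$ ($A^J\to A^I$); $\delta_R(x)(j)=\bigwedge_{i\in I}(x(i)\rightarrow R(i,j))$ ($A^I\to A^J$); $\epsilon_R(y)(i)=\bigwedge_{j\in J}(y(j)\rightarrow R(i,j))$ ($A^J\to A^I$). Galois connection: monotone $\phi,\rho$ with $y\le\phi(x)$ iff $\rho(y)\le x$. Reversed Galois connection: antitone $\delta,\epsilon$ with $y\le\delta(x)$ iff $x\le\epsilon(y)$. For sets $K,L$: $\phi\colon A^K\to A^L$ is $\phi$-type if infima preserving ($\phi(\bigwedge M)=\bigwedge\phi(M)$ for all $M$) and $d^L\rightarrow\phi(x)=\phi(d^K\rightarrow x)$ for all $d\in A$; $\rho\colon A^L\to A^K$ is $\rho$-type if suprema preserving and $d^K\cdot\rho(x)=\rho(d^L\cdot x)$ for all $d$; $\delta\colon A^K\to A^L$ is $\delta$-type if suprema reversing ($\delta(\bigvee M)=\bigwedge\delta(M)$) and $d^L\rightarrow\delta(x)=\delta(d^K\cdot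 x)$ for all $d$. *)

Record CRL := {
  carrier :> Type;
  le : carrier -> carrier -> Prop;
  join : carrier -> carrier -> carrier;
  meet : carrier -> carrier -> carrier;
  mul : carrier -> carrier -> carrier;
  imp : carrier -> carrier -> carrier;
  zero : carrier;
  one : carrier;
  sup : (carrier -> Prop) -> carrier;
  inf : (carrier -> Prop) -> carrier;
  le_refl : forall x, le x x;
  le_antisym : forall x y, le x y -> le y x -> x = y;
  le_trans : forall x y z, le x y -> le y z -> le x z;
  join_ub_l : forall x y, le x (join x y);
  join_ub_r : forall x y, le y (join x y);
  join_lub : forall x y z, le x z -> le y z -> le (join x y) z;
  meet_lb_l : forall x y, le (meet x y) x;
  meet_lb_r : forall x y, le (meet x y) y;
  meet_glb : forall x y z, le z x -> le z y -> le z (meet x y);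
  zero_bot : forall x, le zero x;
  one_top : forall x, le x one;
  sup_ub : forall (S : carrier -> Prop) x, S x -> le x (sup S);
  sup_lub : forall (S : carrier -> Prop) z, (forall x, S x -> le x z) -> le (sup S) z;
  inf_lb : forall (S : carrier -> Prop) x, S x -> le (inf S) x;
  inf_glb : forall (S : carrier -> Prop) z, (forall x, S x -> le z x) -> le z (inf S);
  mul_assoc : forall x y z, mul x (mul y z) = mul (mul x y) z;
  mul_comm : forall x y, mul x y = mul y x;
  mul_one : forall x, mul x one = x;
  residuation : forall x y z, le (mul x y) z <-> le x (imp y z)
}.

Arguments le {_}. Arguments mul {_}. Arguments imp {_}.
Arguments sup {_}. Arguments inf {_}.

Section Ops.
Variable A : CRL.

Definition iinf {I : Type} (f : I -> A) : A := inf (fun a => exists i, a = f i).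
Definition isup {I : Type} (f : I -> A) : A := sup (fun a => exists i, a = f i).

Definition fle {K : Type} (x y : K -> A) : Prop := forall k, le (x k) (y k).

Definition finf {K : Type} (M : (K -> A) -> Prop) : K -> A :=
  fun k => inf (fun a => exists x, M x /\ a = x k).
Definition fsup {K : Type} (M : (K -> A) -> Prop) : K -> A :=
  fun k => sup (fun a => exists x, M x /\ a = x k).

Definition cst (K : Type) (d : A) : K -> A := fun _ => d.

Definition fimp {K : Type} (x y : K -> A) : K -> A := fun k => imp (x k) (y k).
Definition fmul {K : Type} (x y : K -> A) : K -> A := fun k => mul (x k) (y k).

Definition phiR {I J : Type} (R : I -> J -> A) (x : I -> A) : J -> A :=
  fun j => iinf (fun i => imp (R i j) (x i)).
Definition rhoR {I J : Type} (R : I -> J -> A) (y : J -> A) : I -> A :=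
  fun i => isup (fun j => mul (R i j) (y j)).
Definition deltaR {I J : Type} (R : I -> J -> A) (x : I -> A) : J -> A :=
  fun j => iinf (fun i => imp (x i) (R i j)).
Definition epsR {I J : Type} (R : I -> J -> A) (y : J -> A) : I -> A :=
  fun i => iinf (fun j => imp (y j) (R i j)).

Definition feq {K L : Type} (f g : (K -> A) -> (L -> A)) : Prop :=
  forall x l, f x l = g x l.

Definition phi_type {K L : Type} (phi : (K -> A) -> (L -> A)) : Prop :=
  (forall M : (K -> A) -> Prop,
      phi (finf M) = finf (fun y => exists x, M x /\ y = phi x)) /\
  (forall (d : A) (x : K -> A), fimp (cst L d) (phi x) = phi (fimp (cst K d) x)).

Definition rho_type {K L : Type} (rho : (L -> A) -> (K -> A)) : Prop :=
  (forall M : (L -> A) -> Prop,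
      rho (fsup M) = fsup (fun y => exists x, M x /\ y = rho x)) /\
  (forall (d : A) (x : L -> A), fmul (cst K d) (rho x) = rho (fmul (cst L d) x)).

Definition delta_type {K L : Type} (delta : (K -> A) -> (L -> A)) : Prop :=
  (forall M : (K -> A) -> Prop,
      delta (fsup M) = finf (fun y => exists x, M x /\ y = delta x)) /\
  (forall (d : A) (x : K -> A), fimp (cst L d) (delta x) = delta (fmul (cst K d) x)).

Definition galois {I J : Type} (phi : (I -> A) -> (J -> A)) (rho : (J -> A) -> (I -> A)) : Prop :=
  (forall x1 x2, fle x1 x2 -> fle (phi x1) (phi x2)) /\
  (forall y1 y2, fle y1 y2 -> fle (rho y1) (rho y2)) /\
  (forall x y, fle y (phi x) <-> fle (rho y) x).

Definition rgalois {I J : Type} (delta : (I -> A) -> (J -> A)) (eps : (J -> A) -> (I -> A)) : Prop :=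
  (forall x1 x2, fle x1 x2 -> fle (delta x2) (delta x1)) /\
  (forall y1 y2, fle y1 y2 -> fle (eps y2) (eps y1)) /\
  (forall x y, fle y (delta x) <-> fle x (eps y)).

End Ops.

(* Every x : A^K is the join of the scaled characteristic vectors x(k) . chi_k.
   A suprema-preserving map commuting with scalars is therefore determined by
   its values on the chi_k, which gives rho = rho_R with R(k,l) = rho(chi_l)(k);
   a delta-type map turns that join into a meet, giving delta = delta_R with
   R(k,l) = delta(chi_k)(l).  A phi-type map preserves infima, so it has a left
   adjoint rho, and compatibility with d -> _ yields phi = phi_R for the
   relation read off rho.  For a reversed Galois connection of delta-type maps,
   the adjunction forces delta(chi_k)(l) = eps(chi_l)(k). *)
From Stdlib Require Import Setoid FunctionalExtensionality.

Section FuzzyRelationOperators.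
Variable A : CRL.
Local Infix "⊑" := (@le A) (at level 70).
Local Infix "⊗" := (@mul A) (at level 40, left associativity).
Local Infix "⇒" := (@imp A) (at level 55, right associativity).

Lemma imp_intro (x y z : A) : x ⊗ y ⊑ z -> x ⊑ y ⇒ z.
Proof. apply residuation. Qed.

Lemma imp_elim (x y z : A) : x ⊑ y ⇒ z -> x ⊗ y ⊑ z.
Proof. apply residuation. Qed.

Lemma mul_mono_l (a b c : A) : a ⊑ b -> a ⊗ c ⊑ b ⊗ c.
Proof. intros H. apply imp_elim. eapply le_trans; [exact H|]. apply imp_intro, le_refl. Qed.

Lemma mul_mono_r (a b c : A) : a ⊑ b -> c ⊗ a ⊑ c ⊗ b.
Proof. intros H. rewrite (mul_comm _ c a), (mul_comm _ c b). now apply mul_mono_l. Qed.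

Lemma imp_mul_le (a b : A) : (a ⇒ b) ⊗ a ⊑ b.
Proof. apply imp_elim, le_refl. Qed.

Lemma imp_mono_r (a b c : A) : b ⊑ c -> a ⇒ b ⊑ a ⇒ c.
Proof. intros H. apply imp_intro. eapply le_trans; [apply imp_mul_le | exact H]. Qed.

Lemma imp_anti_l (a b c : A) : a ⊑ b -> b ⇒ c ⊑ a ⇒ c.
Proof.
  intros H. apply imp_intro. eapply le_trans; [apply mul_mono_r, H | apply imp_mul_le].
Qed.

Lemma mul_le_r (a b : A) : a ⊗ b ⊑ b.
Proof.
  rewrite mul_comm. eapply le_trans; [apply mul_mono_r, one_top|].
  rewrite mul_one. apply le_refl.
Qed.

Lemma one_le_imp (a b : A) : one A ⊑ a ⇒ b -> a ⊑ b.
Proof. intros H. apply imp_elim in H. now rewrite mul_comm, mul_one in H. Qed.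

Lemma imp_curry (a b c : A) : a ⇒ (b ⇒ c) = (a ⊗ b) ⇒ c.
Proof.
  apply le_antisym.
  - apply imp_intro. rewrite mul_assoc. apply imp_elim, imp_elim, le_refl.
  - apply imp_intro, imp_intro. rewrite <- mul_assoc. apply imp_elim, le_refl.
Qed.

Lemma mulAC (a b c : A) : a ⊗ b ⊗ c = a ⊗ c ⊗ b.
Proof. now rewrite <- !mul_assoc, (mul_comm _ b c). Qed.

Lemma mulCA (a b c : A) : a ⊗ (b ⊗ c) = b ⊗ (a ⊗ c).
Proof. now rewrite !mul_assoc, (mul_comm _ a b). Qed.

Lemma iinf_lb {I} (f : I -> A) i : iinf A f ⊑ f i.
Proof. apply inf_lb. now exists i. Qed.

Lemma iinf_glb {I} (f : I -> A) z : (forall i, z ⊑ f i) -> z ⊑ iinf A f.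
Proof. intros H. apply inf_glb. intros a [i ->]. apply H. Qed.

Lemma isup_ub {I} (f : I -> A) i : f i ⊑ isup A f.
Proof. apply sup_ub. now exists i. Qed.

Lemma isup_lub {I} (f : I -> A) z : (forall i, f i ⊑ z) -> isup A f ⊑ z.
Proof. intros H. apply sup_lub. intros a [i ->]. apply H. Qed.

Lemma feq_eq {K L} (f g : (K -> A) -> (L -> A)) : feq A f g -> f = g.
Proof. intros H. extensionality x. extensionality l. apply H. Qed.

(* The characteristic vector of k0, i.e. top at k0 and bottom elsewhere, written
   as a supremum so that no decidable equality on K is needed. *)
Definition chi {K : Type} (k0 : K) : K -> A := fun k => sup (fun _ : A => k = k0).

Lemma one_le_chi {K} (k0 : K) : one A ⊑ chi k0 k0.
Proof. apply sup_ub. reflexivity. Qed.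

Lemma mul_chi_le {K} (k0 k : K) (d z : A) : (k = k0 -> d ⊑ z) -> d ⊗ chi k0 k ⊑ z.
Proof.
  intros H. rewrite mul_comm. apply imp_elim, sup_lub.
  intros a E. apply imp_intro. eapply le_trans; [apply mul_le_r | now apply H].
Qed.

Lemma fsup_chi {L} (y : L -> A) :
  y = fsup A (fun z => exists l, z = fmul A (cst A L (y l)) (chi l)).
Proof.
  extensionality l'. apply le_antisym.
  - apply le_trans with (y l' ⊗ chi l' l').
    + rewrite <- (mul_one _ (y l')) at 1. apply mul_mono_r, one_le_chi.
    + apply sup_ub. exists (fmul A (cst A L (y l')) (chi l')). split; [now exists l' | reflexivity].
  - apply sup_lub. intros a [x [[l ->] ->]]. apply mul_chi_le. intros ->. apply le_refl.
Qed.

Lemma rho_type_rhoR {K L} (rho : (L -> A) -> (K -> A)) :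
  rho_type A rho -> feq A rho (rhoR A (fun k l => rho (chi l) k)).
Proof.
  intros [Hsup Hmul] y k. rewrite (fsup_chi y) at 1. rewrite Hsup. apply le_antisym.
  - apply sup_lub. intros a [w [[z [[l ->] ->]] ->]].
    rewrite <- Hmul. unfold fmul, cst. rewrite mul_comm.
    apply (isup_ub (fun l => rho (chi l) k ⊗ y l)).
  - apply isup_lub. intros l.
    apply le_trans with (rho (fmul A (cst A L (y l)) (chi l)) k).
    + rewrite <- Hmul. unfold fmul, cst. rewrite mul_comm. apply le_refl.
    + apply sup_ub. eexists. split; [|reflexivity]. eexists. split; [now exists l | reflexivity].
Qed.

Lemma rhoR_rho_type {K L} (R : K -> L -> A) : rho_type A (rhoR A R).
Proof.
  split.
  - intros M. extensionality k. apply le_antisym.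
    + apply isup_lub. intros l. rewrite mul_comm. apply imp_elim, sup_lub.
      intros a [x [Mx ->]]. apply imp_intro. rewrite mul_comm.
      apply le_trans with (rhoR A R x k); [apply (isup_ub (fun l => R k l ⊗ x l))|].
      apply sup_ub. exists (rhoR A R x). split; [now exists x | reflexivity].
    + apply sup_lub. intros a [w [[x [Mx ->]] ->]]. apply isup_lub. intros l.
      eapply le_trans; [|apply (isup_ub (fun l => R k l ⊗ fsup A M l) l)].
      apply mul_mono_r, sup_ub. now exists x.
  - intros d x. extensionality k. apply le_antisym.
    + unfold fmul at 1, cst. rewrite mul_comm. apply imp_elim, isup_lub. intros l.
      apply imp_intro. rewrite mul_comm, mulCA.
      apply (isup_ub (fun l => R k l ⊗ (d ⊗ x l))).
    + apply isup_lub. intros l. unfold fmul, cst. rewrite mulCA.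
      apply mul_mono_r, (isup_ub (fun l => R k l ⊗ x l)).
Qed.

Lemma phiR_of_adjoint {K L} (phi : (K -> A) -> (L -> A)) (rho : (L -> A) -> (K -> A)) :
  (forall x y, fle A y (phi x) <-> fle A (rho y) x) ->
  (forall d x, fimp A (cst A L d) (phi x) = phi (fimp A (cst A K d) x)) ->
  feq A phi (phiR A (fun k l => rho (chi l) k)).
Proof.
  intros Hadj Himp x l. apply le_antisym.
  - apply iinf_glb. intros k. apply imp_intro.
    assert (Hchi : fle A (chi l) (fimp A (cst A L (phi x l)) (phi x))).
    { intros l'. apply imp_intro. rewrite mul_comm. apply mul_chi_le. intros ->. apply le_refl. }
    rewrite Himp in Hchi. apply Hadj, (fun H => H k), imp_elim in Hchi.
    now rewrite mul_comm.
  - set (c := iinf A (fun k => rho (chi l) k ⇒ x k)).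
    assert (Hrho : fle A (rho (chi l)) (fimp A (cst A K c) x)).
    { intros k. apply imp_intro. rewrite mul_comm. apply imp_elim.
      apply (iinf_lb (fun k => rho (chi l) k ⇒ x k)). }
    apply Hadj in Hrho. rewrite <- Himp in Hrho.
    apply one_le_imp. eapply le_trans; [apply (one_le_chi l) | apply Hrho].
Qed.

Lemma inf_preserving_mono {K L} (phi : (K -> A) -> (L -> A)) :
  (forall M, phi (finf A M) = finf A (fun y => exists x, M x /\ y = phi x)) ->
  forall x1 x2, fle A x1 x2 -> fle A (phi x1) (phi x2).
Proof.
  intros Hinf x1 x2 H.
  assert (E : finf A (fun x => x = x1 \/ x = x2) = x1).
  { extensionality k. apply le_antisym.
    - apply inf_lb. exists x1. split; [now left | reflexivity].
    - apply inf_glb. intros a [x [[-> | ->] ->]]; [apply le_refl | apply H]. }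
  rewrite <- E, Hinf. intros l. apply inf_lb.
  exists (phi x2). split; [exists x2; split; [now right | reflexivity] | reflexivity].
Qed.

Lemma inf_preserving_adjoint {K L} (phi : (K -> A) -> (L -> A)) :
  (forall M, phi (finf A M) = finf A (fun y => exists x, M x /\ y = phi x)) ->
  exists rho, forall x y, fle A y (phi x) <-> fle A (rho y) x.
Proof.
  intros Hinf. exists (fun y => finf A (fun x => fle A y (phi x))). intros x y. split.
  - intros H k. apply inf_lb. now exists x.
  - intros H l. eapply le_trans; [|apply (inf_preserving_mono phi Hinf _ _ H l)].
    rewrite Hinf. apply inf_glb. intros a [w [[z [Hz ->]] ->]]. apply Hz.
Qed.

Lemma phiR_phi_type {K L} (R : K -> L -> A) : phi_type A (phiR A R).
Proof.
  split.
  - intros M. extensionality l. apply le_antisym.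
    + apply inf_glb. intros a [w [[x [Mx ->]] ->]]. apply iinf_glb. intros k.
      eapply le_trans; [apply (iinf_lb _ k)|]. apply imp_mono_r, inf_lb. now exists x.
    + apply iinf_glb. intros k. apply imp_intro, inf_glb. intros a [x [Mx ->]].
      apply imp_elim. eapply le_trans.
      * apply inf_lb. exists (phiR A R x). split; [now exists x | reflexivity].
      * apply (iinf_lb (fun k => R k l ⇒ x k)).
  - intros d x. extensionality l. unfold fimp at 1 2, cst. apply le_antisym.
    + apply iinf_glb. intros k. rewrite !imp_curry, mul_comm, <- imp_curry.
      apply imp_mono_r, (iinf_lb (fun k => R k l ⇒ x k)).
    + apply imp_intro, iinf_glb. intros k. apply imp_intro. rewrite mulAC.
      apply imp_elim, imp_elim, (iinf_lb (fun k => R k l ⇒ (d ⇒ x k))).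
Qed.

Lemma phiR_rhoR_galois {K L} (R : K -> L -> A) : galois A (phiR A R) (rhoR A R).
Proof.
  split; [|split].
  - intros x1 x2 H l. apply iinf_glb. intros k.
    eapply le_trans; [apply (iinf_lb _ k) | apply imp_mono_r, H].
  - intros y1 y2 H k. apply isup_lub. intros l.
    eapply le_trans; [apply mul_mono_r, H | apply (isup_ub (fun l => R k l ⊗ y2 l))].
  - intros x y. split.
    + intros H k. apply isup_lub. intros l. rewrite mul_comm. apply imp_elim.
      eapply le_trans; [apply H | apply (iinf_lb (fun k => R k l ⇒ x k))].
    + intros H l. apply iinf_glb. intros k. apply imp_intro. rewrite mul_comm.
      eapply le_trans; [apply (isup_ub (fun l => R k l ⊗ y l)) | apply H].
Qed.

Lemma delta_type_deltaR {K L} (delta : (K -> A) -> (L -> A)) :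
  delta_type A delta -> feq A delta (deltaR A (fun k l => delta (chi k) l)).
Proof.
  intros [Hsup Hmul] x l. rewrite (fsup_chi x) at 1. rewrite Hsup. apply le_antisym.
  - apply iinf_glb. intros k. apply inf_lb. eexists. split.
    + eexists. split; [now exists k | reflexivity].
    + now rewrite <- Hmul.
  - apply inf_glb. intros a [w [[z [[k ->] ->]] ->]].
    rewrite <- Hmul. apply (iinf_lb (fun k => x k ⇒ delta (chi k) l)).
Qed.

Lemma deltaR_delta_type {K L} (R : K -> L -> A) : delta_type A (deltaR A R).
Proof.
  split.
  - intros M. extensionality l. apply le_antisym.
    + apply inf_glb. intros a [w [[x [Mx ->]] ->]]. apply iinf_glb. intros k.
      eapply le_trans; [apply (iinf_lb _ k)|]. apply imp_anti_l, sup_ub. now exists x.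
    + apply iinf_glb. intros k. apply imp_intro. rewrite mul_comm.
      apply imp_elim, sup_lub. intros a [x [Mx ->]].
      apply imp_intro. rewrite mul_comm. apply imp_elim. eapply le_trans.
      * apply inf_lb. exists (deltaR A R x). split; [now exists x | reflexivity].
      * apply (iinf_lb (fun k => x k ⇒ R k l)).
  - intros d x. extensionality l. unfold fimp at 1, fmul, cst. apply le_antisym.
    + apply iinf_glb. intros k. rewrite <- imp_curry.
      apply imp_mono_r, (iinf_lb (fun k => x k ⇒ R k l)).
    + apply imp_intro, iinf_glb. intros k. apply imp_intro. rewrite <- mul_assoc.
      apply imp_elim, (iinf_lb (fun k => (d ⊗ x k) ⇒ R k l)).
Qed.

Lemma epsR_deltaR {K L} (R : K -> L -> A) : epsR A R = deltaR A (fun l k => R k l).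
Proof. reflexivity. Qed.

Lemma deltaR_anti {K L} (R : K -> L -> A) x1 x2 :
  fle A x1 x2 -> fle A (deltaR A R x2) (deltaR A R x1).
Proof.
  intros H l. apply iinf_glb. intros k.
  eapply le_trans; [apply (iinf_lb _ k) | apply imp_anti_l, H].
Qed.

Lemma deltaR_epsR_rgalois {K L} (R : K -> L -> A) : rgalois A (deltaR A R) (epsR A R).
Proof.
  split; [apply deltaR_anti | split; [rewrite epsR_deltaR; apply deltaR_anti|]].
  intros x y. split.
  - intros H k. apply iinf_glb. intros l. apply imp_intro. rewrite mul_comm.
    apply imp_elim. eapply le_trans; [apply H | apply (iinf_lb (fun k => x k ⇒ R k l))].
  - intros H l. apply iinf_glb. intros k. apply imp_intro. rewrite mul_comm.
    apply imp_elim. eapply le_trans; [apply H | apply (iinf_lb (fun l => y l ⇒ R k l))].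
Qed.

Lemma rgalois_sym {K L} (delta : (K -> A) -> (L -> A)) (eps : (L -> A) -> (K -> A)) :
  rgalois A delta eps -> rgalois A eps delta.
Proof. intros [Hd [He Hadj]]. split; [exact He | split; [exact Hd|]]. firstorder. Qed.

Lemma rgalois_chi_le {K L} (delta : (K -> A) -> (L -> A)) (eps : (L -> A) -> (K -> A)) :
  rgalois A delta eps ->
  (forall d y, fimp A (cst A K d) (eps y) = eps (fmul A (cst A L d) y)) ->
  forall k l, delta (chi k) l ⊑ eps (chi l) k.
Proof.
  intros [_ [_ Hadj]] Hmul k l.
  assert (Hchi : fle A (fmul A (cst A L (delta (chi k) l)) (chi l)) (delta (chi k))).
  { intros l'. apply mul_chi_le. intros ->. apply le_refl. }
  apply Hadj in Hchi. rewrite <- Hmul in Hchi.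
  apply one_le_imp. eapply le_trans; [apply (one_le_chi k) | apply Hchi].
Qed.

Lemma rgalois_chi {K L} (delta : (K -> A) -> (L -> A)) (eps : (L -> A) -> (K -> A)) :
  delta_type A delta -> delta_type A eps -> rgalois A delta eps ->
  (fun k l => eps (chi l) k) = (fun k l => delta (chi k) l).
Proof.
  intros [_ Hd] [_ He] G. extensionality k. extensionality l. apply le_antisym.
  - exact (rgalois_chi_le eps delta (rgalois_sym _ _ G) Hd l k).
  - exact (rgalois_chi_le delta eps G He k l).
Qed.

Lemma phi_type_iff {K L} (phi : (K -> A) -> (L -> A)) :
  phi_type A phi <-> exists R, feq A phi (phiR A R).
Proof.
  split.
  - intros [Hinf Himp]. destruct (inf_preserving_adjoint phi Hinf) as [rho Hadj].
    eexists. exact (phiR_of_adjoint phi rho Hadj Himp).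
  - intros [R H%feq_eq]. subst. apply phiR_phi_type.
Qed.

Lemma rho_type_iff {K L} (rho : (L -> A) -> (K -> A)) :
  rho_type A rho <-> exists R, feq A rho (rhoR A R).
Proof.
  split.
  - intros H. eexists. exact (rho_type_rhoR rho H).
  - intros [R H%feq_eq]. subst. apply rhoR_rho_type.
Qed.

Lemma galois_iff {K L} (phi : (K -> A) -> (L -> A)) (rho : (L -> A) -> (K -> A)) :
  phi_type A phi -> rho_type A rho ->
  galois A phi rho <-> exists R, feq A phi (phiR A R) /\ feq A rho (rhoR A R).
Proof.
  intros [_ Himp] Hrho. split.
  - intros [_ [_ Hadj]]. eexists.
    split; [exact (phiR_of_adjoint phi rho Hadj Himp) | exact (rho_type_rhoR rho Hrho)].
  - intros [R [H1%feq_eq H2%feq_eq]]. subst. apply phiR_rhoR_galois.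
Qed.

Lemma delta_type_iff {K L} (delta : (K -> A) -> (L -> A)) :
  delta_type A delta <-> exists R, feq A delta (deltaR A R).
Proof.
  split.
  - intros H. eexists. exact (delta_type_deltaR delta H).
  - intros [R H%feq_eq]. subst. apply deltaR_delta_type.
Qed.

Lemma delta_type_iff_epsR {K L} (eps : (L -> A) -> (K -> A)) :
  delta_type A eps <-> exists R, feq A eps (epsR A R).
Proof.
  split.
  - intros H. exists (fun k l => eps (chi l) k). exact (delta_type_deltaR eps H).
  - intros [R H%feq_eq]. subst. rewrite epsR_deltaR. apply deltaR_delta_type.
Qed.

Lemma rgalois_iff {K L} (delta : (K -> A) -> (L -> A)) (eps : (L -> A) -> (K -> A)) :
  delta_type A delta -> delta_type A eps ->
  rgalois A delta eps <-> exists R, feq A delta (deltaR A R) /\ feq A eps (epsR A R).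
Proof.
  intros Hd He. split.
  - intros G. exists (fun k l => delta (chi k) l). split.
    + exact (delta_type_deltaR delta Hd).
    + rewrite <- (rgalois_chi delta eps Hd He G). exact (delta_type_deltaR eps He).
  - intros [R [H1%feq_eq H2%feq_eq]]. subst. apply deltaR_epsR_rgalois.
Qed.

End FuzzyRelationOperators.

Theorem theorem3 (A : CRL) (I J : Type) :
  (* (i) *)
  ((forall phi : (I -> A) -> (J -> A),
      phi_type A phi <-> exists R : I -> J -> A, feq A phi (phiR A R)) /\
   (forall rho : (J -> A) -> (I -> A),
      rho_type A rho <-> exists R : I -> J -> A, feq A rho (rhoR A R)) /\
   (forall (phi : (I -> A) -> (J -> A)) (rho : (J -> A) -> (I -> A)),
      phi_type A phi -> rho_type A rho ->
      (galois A phi rho <->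
       exists R : I -> J -> A, feq A phi (phiR A R) /\ feq A rho (rhoR A R)))) /\
  (* (ii) *)
  ((forall delta : (I -> A) -> (J -> A),
      delta_type A delta <-> exists R : I -> J -> A, feq A delta (deltaR A R)) /\
   (forall eps : (J -> A) -> (I -> A),
      delta_type A eps <-> exists R : I -> J -> A, feq A eps (epsR A R)) /\
   (forall (delta : (I -> A) -> (J -> A)) (eps : (J -> A) -> (I -> A)),
      delta_type A delta -> delta_type A eps ->
      (rgalois A delta eps <->
       exists R : I -> J -> A, feq A delta (deltaR A R) /\ feq A eps (epsR A R)))).
Proof.
  split; split; [|split| |split].
  - apply phi_type_iff.
  - apply rho_type_iff.
  - apply galois_iff.
  - apply delta_type_iff.
  - apply delta_type_iff_epsR.
  - apply rgalois_iff.
Qed.
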